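(* Let $\mathcal{D} \subset \mathbb{R}^d$ be a finite nonempty set of vectors and let $q \in \mathbb{R}^d$. Then there exists a scalar $\bar{\mu} \in \mathbb{R}$ such that for every $\mu > \max(\bar{\mu}, 0)$, every nearest neighbor of $q' = \mu q$ in $\mathcal{D}$ is a maximum inner product solution for $q$; that is, if $p \in \mathcal{D}$ satisfies $\lVert p - \mu q\rVert \le \lVert p' - \mu q\rVert$ for all $p' \in \mathcal{D}$, then $\langle p, q\rangle \ge \langle p', q\rangle$ for all $p' \in \mathcal{D}$.
   Context: $\lVert\cdot\rVert$ is the Euclidean ($L_2$) norm and $\langle\cdot,\cdot\rangle$ the standard inner product on $\mathbb{R}^d$. A nearest neighbor of a vector $x$ in $\mathcal{D}$ is a point of $\mathcal{D}$ minimizing the Euclidean distance to $x$; a maximum inner product solution for $q$ is a point of $\mathcal{D}$ maximizing $\langle \cdot, q\rangle$ over $\mathcal{D}$. *)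

From mathcomp Require Import all_boot all_order all_algebra.
From mathcomp Require Import reals.
Set Implicit Arguments. Unset Strict Implicit. Unset Printing Implicit Defensive.
Import Order.TTheory GRing.Theory Num.Theory.
Local Open Scope ring_scope.

Definition dotp (R : rcfType) (d : nat) (u v : 'rV[R]_d) : R :=
  \sum_(i < d) u 0 i * v 0 i.

Definition enorm (R : rcfType) (d : nat) (u : 'rV[R]_d) : R :=
  Num.sqrt (dotp u u).

(* Expanding the square, ‖p - μ q‖² = ‖p‖² - 2μ⟨p, q⟩ + μ²‖q‖², so comparing
   the distances of p and p' to μ q amounts to comparing
   ‖p‖² - 2μ⟨p, q⟩ with ‖p'‖² - 2μ⟨p', q⟩.  If ⟨p', q⟩ > ⟨p, q⟩, then p can
   only be at least as close as p' when
   μ ≤ (‖p'‖² - ‖p‖²) / (2(⟨p', q⟩ - ⟨p, q⟩)); any μ above all these finitely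
   many ratios therefore makes every nearest neighbour an inner-product
   maximiser. *)
From mathcomp Require Import all_boot all_order all_algebra.
From mathcomp Require Import reals.
From mathcomp Require Import ring lra.

Set Implicit Arguments.
Unset Strict Implicit.
Unset Printing Implicit Defensive.
Import Order.TTheory GRing.Theory Num.Theory.
Local Open Scope ring_scope.

Lemma ler_sum_mem (R : numDomainType) (T : eqType) (s : seq T) (F : T -> R) x :
  (forall y, 0 <= F y) -> x \in s -> F x <= \sum_(y <- s) F y.
Proof. by move=> F_ge0 xs; rewrite (big_rem x) //= lerDl sumr_ge0. Qed.

Section InnerProduct.

Variables (R : rcfType) (d : nat).
Implicit Types (u v q : 'rV[R]_d) (mu : R).

Lemma dotp_ge0 u : 0 <= dotp u u.
Proof. by rewrite /dotp sumr_ge0 // => i _; rewrite -expr2 sqr_ge0. Qed.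

Lemma ler_enorm u v : (enorm u <= enorm v) = (dotp u u <= dotp v v).
Proof. by rewrite /enorm ler_sqrt ?dotp_ge0. Qed.

Lemma dotp_subZ u q mu :
  dotp (u - mu *: q) (u - mu *: q) =
  dotp u u - 2 * mu * dotp u q + mu ^+ 2 * dotp q q.
Proof.
rewrite /dotp (eq_bigr (fun i => u 0 i * u 0 i - 2 * mu * (u 0 i * q 0 i)
   + mu ^+ 2 * (q 0 i * q 0 i))); last by move=> i _; rewrite !mxE; ring.
by rewrite !big_split /= sumrN -!mulr_sumr.
Qed.

Lemma enorm_subZ_le u v q mu :
  enorm (u - mu *: q) <= enorm (v - mu *: q) ->
  2 * mu * (dotp v q - dotp u q) <= dotp v v - dotp u u.
Proof. rewrite ler_enorm !dotp_subZ; lra. Qed.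

(* The absolute values make every ratio nonnegative, so that their sum
   [mip_threshold] can stand in for their maximum. *)
Definition gap_ratio q u v : R :=
  `|dotp v v - dotp u u| / `|2 * (dotp v q - dotp u q)|.

Lemma gap_ratio_ge0 q u v : 0 <= gap_ratio q u v.
Proof. by rewrite divr_ge0. Qed.

Lemma closer_lower_dotp_le_gap_ratio u v q mu :
  dotp u q < dotp v q -> enorm (u - mu *: q) <= enorm (v - mu *: q) ->
  mu <= gap_ratio q u v.
Proof.
move=> lt_uv /enorm_subZ_le le_uv.
have gap_gt0 : 0 < 2 * (dotp v q - dotp u q) by rewrite mulr_gt0 // subr_gt0.
rewrite /gap_ratio (gtr0_norm gap_gt0) ler_pdivlMr //.
by rewrite (le_trans _ (ler_norm _)) // mulrA [mu * 2]mulrC.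
Qed.

Definition mip_threshold (D : seq 'rV[R]_d) q : R :=
  \sum_(u <- D) \sum_(v <- D) gap_ratio q u v.

Lemma gap_ratio_le_threshold D q u v :
  u \in D -> v \in D -> gap_ratio q u v <= mip_threshold D q.
Proof.
move=> uD vD.
have row_le : gap_ratio q u v <= \sum_(w <- D) gap_ratio q u w.
  exact: ler_sum_mem (gap_ratio_ge0 q u) vD.
apply: le_trans row_le (ler_sum_mem _ uD) => w.
by rewrite sumr_ge0 // => y _; apply: gap_ratio_ge0.
Qed.

End InnerProduct.

Theorem theorem1 (R : realType) (d : nat) (D : seq 'rV[R]_d) (q : 'rV[R]_d) :
  D != [::] ->
  exists mubar : R, forall mu : R, Num.max mubar 0 < mu ->
    forall p, p \in D ->
      (forall p', p' \in D -> enorm (p - mu *: q) <= enorm (p' - mu *: q)) ->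
      forall p', p' \in D -> dotp p' q <= dotp p q.
Proof.
move=> _; exists (mip_threshold D q) => mu.
rewrite gt_max => /andP[threshold_lt_mu _] p pD p_nearest p' p'D.
rewrite leNgt; apply/negP => lt_pp'.
have := closer_lower_dotp_le_gap_ratio lt_pp' (p_nearest p' p'D).
rewrite leNgt => /negP; apply.
exact: le_lt_trans (gap_ratio_le_threshold q pD p'D) threshold_lt_mu.
Qed.
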